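(* Every quasi-semi-simple group $(G,\tau)$ is topologically minimal: if $\tau'$ is a Hausdorff topology on $G$ making $G$ a topological group and $\tau'\subseteq\tau$, then $\tau'=\tau$.
   Context: A locally compact group $G$ is quasi-semi-simple (qss) if there is a closed subgroup $A<G$ such that (i) $G=CAC$ for some compact $C\subset G$; (ii) for every net $(a_\alpha)$ in $A$ converging to infinity there is a subnet $(a_\beta)$ such that $U^{(a_\beta)}_+$ is not precompact and the subgroup generated by $U^{(a_\beta)}_+,U^{(a_\beta)}_-,U^{(a_\beta)}_0$ is dense in $G$, where for a net $(g_\alpha)$: $U^{(g_\alpha)}_+=\{x: g_\alpha^{-1}xg_\alpha\to e\}$, $U^{(g_\alpha)}_-=\{x: g_\alpha xg_\alpha^{-1}\to e\}$, and $U^{(g_\alpha)}_0$ is the set of $x$ such that every subnet of each of the nets $(g_\alpha^{-1}xg_\alpha)$, $(g_\alpha xg_\alpha^{-1})$ admits a converging subnet. *)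

From Stdlib Require Import List.

Set Implicit Arguments.

Record GroupOn (G : Type) := {
  gmul : G -> G -> G;
  ginv : G -> G;
  gone : G;
  gmul_assoc : forall x y z, gmul x (gmul y z) = gmul (gmul x y) z;
  gmul_1l : forall x, gmul gone x = x;
  gmul_1r : forall x, gmul x gone = x;
  gmul_Vl : forall x, gmul (ginv x) x = gone;
  gmul_Vr : forall x, gmul x (ginv x) = gone
}.

Record directed := {
  dT :> Type;
  dle : dT -> dT -> Prop;
  dle_refl : forall a, dle a a;
  dle_trans : forall a b c, dle a b -> dle b c -> dle a c;
  dle_dir : forall a b, exists c, dle a c /\ dle b c;
  d_inhab : dT
}.

Definition eventually (D : directed) (P : D -> Prop) : Prop :=
  exists a0 : D, forall a : D, dle D a0 a -> P a.

(* (E, h) defines a subnet of any net indexed by D: h is cofinal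
   (Willard's notion: for every d, eventually h e >= d). The subnet of x is x \o h. *)
Definition is_subnet (D E : directed) (h : E -> D) : Prop :=
  forall d : D, eventually E (fun e => dle D d (h e)).

Section Topology.
Context {G : Type} (tau : (G -> Prop) -> Prop).

Definition is_topology : Prop :=
  tau (fun _ => True) /\
  (forall (I : Type) (U : I -> G -> Prop),
      (forall i, tau (U i)) -> tau (fun x => exists i, U i x)) /\
  (forall U V, tau U -> tau V -> tau (fun x => U x /\ V x)).

Definition hausdorff : Prop :=
  forall x y : G, x <> y -> exists U V, tau U /\ tau V /\ U x /\ V y /\
    (forall z, U z -> V z -> False).

Definition compact (K : G -> Prop) : Prop :=
  forall (I : Type) (U : I -> G -> Prop),
    (forall i, tau (U i)) -> (forall x, K x -> exists i, U i x) ->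
    exists l : list I, forall x, K x -> exists i, In i l /\ U i x.

Definition closure (S : G -> Prop) : G -> Prop :=
  fun x => forall U, tau U -> U x -> exists y, U y /\ S y.

Definition closed (S : G -> Prop) : Prop := tau (fun x => ~ S x).

Definition precompact (S : G -> Prop) : Prop := compact (closure S).

Definition dense (S : G -> Prop) : Prop := forall x, closure S x.

Definition locally_compact : Prop :=
  forall x : G, exists U K, tau U /\ U x /\ compact K /\ (forall y, U y -> K y).

Definition converges {D : directed} (x : D -> G) (l : G) : Prop :=
  forall U, tau U -> U l -> eventually D (fun a => U (x a)).

Definition to_infinity {D : directed} (x : D -> G) : Prop :=
  forall K, compact K -> eventually D (fun a => ~ K (x a)).

Definition every_subnet_has_conv_subnet {D : directed} (x : D -> G) : Prop :=
  forall (E : directed) (h : E -> D), is_subnet D E h ->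
    exists (F : directed) (k : F -> E) (l : G),
      is_subnet E F k /\ converges (D := F) (fun f => x (h (k f))) l.

End Topology.

Section Groups.
Context {G : Type} (Gr : GroupOn G) (tau : (G -> Prop) -> Prop).

Local Notation "x * y" := (gmul Gr x y).
Local Notation "x ^-1" := (ginv Gr x) (at level 3).
Local Notation e := (gone Gr).

Definition is_topological_group : Prop :=
  is_topology tau /\
  (forall U, tau U -> forall x y, U (x * y) ->
     exists A B, tau A /\ tau B /\ A x /\ B y /\
       (forall a b, A a -> B b -> U (a * b))) /\
  (forall U, tau U -> tau (fun x => U (x ^-1))).

Definition is_subgroup (H : G -> Prop) : Prop :=
  H e /\ (forall x y, H x -> H y -> H (x * y)) /\ (forall x, H x -> H (x ^-1)).

Definition generated (S : G -> Prop) : G -> Prop :=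
  fun x => forall H, is_subgroup H -> (forall y, S y -> H y) -> H x.

Definition Uplus {D : directed} (g : D -> G) : G -> Prop :=
  fun x => converges tau (fun a => (g a)^-1 * x * g a) e.
Definition Uminus {D : directed} (g : D -> G) : G -> Prop :=
  fun x => converges tau (fun a => g a * x * (g a)^-1) e.
Definition Uzero {D : directed} (g : D -> G) : G -> Prop :=
  fun x => every_subnet_has_conv_subnet tau (fun a => (g a)^-1 * x * g a) /\
           every_subnet_has_conv_subnet tau (fun a => g a * x * (g a)^-1).

Definition quasi_semi_simple : Prop :=
  exists (A : G -> Prop) (C : G -> Prop),
    is_subgroup A /\ closed tau A /\ compact tau C /\
    (forall g, exists c1 a c2, C c1 /\ A a /\ C c2 /\ g = c1 * a * c2) /\
    (forall (D : directed) (a : D -> G), (forall i, A (a i)) ->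
       to_infinity tau a ->
       exists (E : directed) (h : E -> D),
         is_subnet D E h /\
         ~ precompact tau (Uplus (fun b => a (h b))) /\
         dense tau (generated (fun x => Uplus (fun b => a (h b)) x \/
                                        Uminus (fun b => a (h b)) x \/
                                        Uzero (fun b => a (h b)) x))).

End Groups.

(* Let tau' be a coarser Hausdorff group topology. It suffices that every net y
   converging to x for tau' has a subnet converging to x for tau. Write y = c1 a c2
   with c1, c2 in the compact set C and a in A, and pass to a subnet on which c1 and c2
   converge for tau (to l1, l2), hence for tau'; then a = c1^-1 y c2^-1 converges for
   tau' to some b. If a went to infinity for tau, quasi-semi-simplicity would give a
   subnet whose contracting group U_+ is not precompact; but for u in U_+ the conjugates
   a^-1 u a tend to e for tau, hence for tau', and also to b^-1 u b, so u = e and U_+ is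
   trivial. Hence a frequently stays in a compact set, a further subnet of a converges
   for tau to some p, and y converges for tau to l1 p l2, which equals x because tau' is
   coarser and Hausdorff. *)
From Stdlib Require Import List Classical ClassicalEpsilon FunctionalExtensionality PropExtensionality.

Set Implicit Arguments.

Definition frequently (D : directed) (P : D -> Prop) : Prop :=
  forall d : D, exists d', dle D d d' /\ P d'.

Lemma eventually_and (D : directed) (P Q : D -> Prop) :
  eventually D P -> eventually D Q -> eventually D (fun a => P a /\ Q a).
Proof.
  intros [a Ha] [b Hb]. destruct (dle_dir D a b) as [c [Hac Hbc]].
  exists c. intros d Hd. split; [apply Ha | apply Hb]; eapply dle_trans; eauto.
Qed.

Lemma eventually_ex (D : directed) (P : D -> Prop) : eventually D P -> exists a, P a.
Proof. intros [a Ha]. exists a. apply Ha, dle_refl. Qed.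

Lemma is_subnet_comp (D E F : directed) (h : E -> D) (k : F -> E) :
  is_subnet D E h -> is_subnet E F k -> is_subnet D F (fun f => h (k f)).
Proof.
  intros Hh Hk d. destruct (Hh d) as [e0 He0]. destruct (Hk e0) as [f0 Hf0].
  exists f0. intros f Hf. apply He0, Hf0, Hf.
Qed.

Section Nets.
Context {G : Type} (tau : (G -> Prop) -> Prop).

Lemma converges_subnet (D E : directed) (x : D -> G) (h : E -> D) l :
  converges tau x l -> is_subnet D E h -> converges tau (fun e => x (h e)) l.
Proof.
  intros Hc Hs U HU Ul. destruct (Hc U HU Ul) as [a0 Ha0].
  destruct (Hs a0) as [e0 He0]. exists e0. intros e He. apply Ha0, He0, He.
Qed.

Lemma converges_coarser {tau' : (G -> Prop) -> Prop} (D : directed) (x : D -> G) l :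
  (forall U, tau' U -> tau U) -> converges tau x l -> converges tau' x l.
Proof. intros Hsub Hc U HU Ul. apply Hc; auto. Qed.

Lemma converges_ext (D : directed) (x z : D -> G) l :
  (forall d, x d = z d) -> converges tau x l -> converges tau z l.
Proof.
  intros Hxz Hc U HU Ul. destruct (Hc U HU Ul) as [a0 Ha0]. exists a0.
  intros a Ha. rewrite <- Hxz. apply Ha0, Ha.
Qed.

Lemma converges_const (D : directed) (c : G) : converges tau (fun _ : D => c) c.
Proof. intros U HU Uc. exists (d_inhab D). intros; exact Uc. Qed.

Lemma converges_unique (D : directed) (x : D -> G) l1 l2 :
  hausdorff tau -> converges tau x l1 -> converges tau x l2 -> l1 = l2.
Proof.
  intros Hh H1 H2. apply NNPP; intro Hne.
  destruct (Hh _ _ Hne) as [U [V [HU [HV [Ul [Vl Hd]]]]]].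
  destruct (eventually_ex (eventually_and (H1 U HU Ul) (H2 V HV Vl))) as [a [Ha Hb]].
  exact (Hd _ Ha Hb).
Qed.

Lemma not_to_infinity_frequently (D : directed) (x : D -> G) :
  ~ to_infinity tau x -> exists K, compact tau K /\ frequently D (fun d => K (x d)).
Proof.
  intro Hninf. apply NNPP; intro HnK. apply Hninf. intros K HK.
  apply NNPP; intro Hne. apply HnK. exists K. split; [exact HK|].
  intro d. apply NNPP; intro Hnd. apply Hne.
  exists d. intros d' Hdd' Kx. apply Hnd. eauto.
Qed.

Lemma compact_frequently_cluster (K : G -> Prop) (D : directed) (x : D -> G) :
  compact tau K -> frequently D (fun d => K (x d)) ->
  exists p, forall V, tau V -> V p -> frequently D (fun d => V (x d)).
Proof.
  intros Hc Hfreq. apply NNPP; intro Hno.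
  (* the open sets that [x] eventually avoids would form a cover of [K] *)
  set (I := {V : G -> Prop | tau V /\ exists d, forall d', dle D d d' -> ~ V (x d')}).
  destruct (Hc I (fun i => proj1_sig i) (fun i => proj1 (proj2_sig i))) as [l Hl].
  - intros p Kp. apply NNPP; intro Hn. apply Hno. exists p. intros V HV Vp d.
    apply NNPP; intro Hd. apply Hn.
    exists (exist _ V (conj HV (ex_intro _ d (fun d' Hdd' HVx => Hd (ex_intro _ d' (conj Hdd' HVx)))))).
    exact Vp.
  - assert (Havoid : forall l : list I, exists d,
               forall i, In i l -> forall d', dle D d d' -> ~ proj1_sig i (x d')).
    { induction l0 as [|i0 l0 IH].
      - exists (d_inhab D). intros i [].
      - destruct IH as [d1 Hd1]. destruct (proj2 (proj2_sig i0)) as [d2 Hd2].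
        destruct (dle_dir D d1 d2) as [d3 [H13 H23]]. exists d3.
        intros i [<-|Hi] d' Hd'.
        + apply Hd2. eapply dle_trans; eauto.
        + apply Hd1; auto. eapply dle_trans; eauto. }
    destruct (Havoid l) as [d Hd]. destruct (Hfreq d) as [d' [Hdd' Kd']].
    destruct (Hl _ Kd') as [i [Hi Ui]]. exact (Hd i Hi d' Hdd' Ui).
Qed.

Lemma cluster_subnet_converges (D : directed) (x : D -> G) p :
  is_topology tau -> (forall V, tau V -> V p -> frequently D (fun d => V (x d))) ->
  exists (F : directed) (k : F -> D), is_subnet D F k /\ converges tau (fun f => x (k f)) p.
Proof.
  intros [HT [_ HI]] Hp.
  (* the usual subnet indexed by pairs (d, V) with x d in V *)
  set (FT := {q : D * (G -> Prop) | tau (snd q) /\ snd q p /\ snd q (x (fst q))}).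
  set (Fle := fun q1 q2 : FT => dle D (fst (proj1_sig q1)) (fst (proj1_sig q2)) /\
                 forall z, snd (proj1_sig q2) z -> snd (proj1_sig q1) z).
  assert (Hrefl : forall q, Fle q q) by (intro q; split; [apply dle_refl | auto]).
  assert (Htrans : forall a b c, Fle a b -> Fle b c -> Fle a c).
  { intros a b c [Hab1 Hab2] [Hbc1 Hbc2]. split; [eapply dle_trans; eauto | auto]. }
  assert (Hdir : forall a b, exists c, Fle a c /\ Fle b c).
  { intros [[d1 V1] [HV1 [V1p V1x]]] [[d2 V2] [HV2 [V2p V2x]]].
    destruct (dle_dir D d1 d2) as [d3 [H13 H23]].
    set (W := fun z => V1 z /\ V2 z).
    assert (HW : tau W) by (apply HI; auto).
    destruct (Hp W HW (conj V1p V2p) d3) as [d' [H3' Wx]].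
    exists (exist _ (d', W) (conj HW (conj (conj V1p V2p) Wx))).
    split; split; simpl; try (eapply dle_trans; eauto); intros z [Hz1 Hz2]; auto. }
  assert (q0 : FT) by (exists (d_inhab D, fun _ => True); simpl; auto).
  exists (Build_directed Fle Hrefl Htrans Hdir q0), (fun q => fst (proj1_sig q)). split.
  - intro d. exists (exist _ (d, fun _ => True) (conj HT (conj I I)) : FT).
    intros q [Hq1 _]. exact Hq1.
  - intros U HU Up. destruct (Hp U HU Up (d_inhab D)) as [d' [_ Ux]].
    exists (exist _ (d', U) (conj HU (conj Up Ux)) : FT).
    intros [[dq Vq] [HVq [Vqp Vqx]]] [_ Hsub]. simpl in *. apply Hsub. exact Vqx.
Qed.

Lemma compact_subnet_converges {K : G -> Prop} {D : directed} {x : D -> G} :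
  is_topology tau -> compact tau K -> frequently D (fun d => K (x d)) ->
  exists (F : directed) (k : F -> D) (l : G),
    is_subnet D F k /\ converges tau (fun f => x (k f)) l.
Proof.
  intros Htop Hc Hfreq.
  destruct (compact_frequently_cluster x Hc Hfreq) as [p Hp].
  destruct (cluster_subnet_converges x Htop Hp) as [F [k Hk]]. eauto.
Qed.

Lemma precompact_sub1 (S : G -> Prop) p :
  hausdorff tau -> (forall z, S z -> z = p) -> precompact tau S.
Proof.
  intros Hh HS I U HU Hcov.
  assert (Hcl : forall z, closure tau S z -> z = p).
  { intros z Hz. apply NNPP; intro Hne.
    destruct (Hh _ _ Hne) as [V [W [HV [HW [Vz [Wp Hd]]]]]].
    destruct (Hz V HV Vz) as [w [Vw Sw]]. rewrite (HS w Sw) in Vw. exact (Hd _ Vw Wp). }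
  destruct (classic (closure tau S p)) as [Hp | Hp].
  - destruct (Hcov p Hp) as [i Ui]. exists (i :: nil). intros z Hz.
    exists i. split; [left; reflexivity|]. rewrite (Hcl z Hz). exact Ui.
  - exists nil. intros z Hz. exfalso. apply Hp. rewrite <- (Hcl z Hz). exact Hz.
Qed.

Lemma open_of_nbhds (U : G -> Prop) :
  is_topology tau -> (forall x, U x -> exists V, tau V /\ V x /\ forall z, V z -> U z) ->
  tau U.
Proof.
  intros [_ [Hun _]] Hloc.
  set (I := {V : G -> Prop | tau V /\ forall z, V z -> U z}).
  replace U with (fun x => exists i : I, proj1_sig i x).
  - apply Hun. intro i. exact (proj1 (proj2_sig i)).
  - apply functional_extensionality; intro x. apply propositional_extensionality. split.
    + intros [i Hi]. exact (proj2 (proj2_sig i) x Hi).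
    + intro Ux. destruct (Hloc x Ux) as [V [HV [Vx HVU]]].
      exists (exist _ V (conj HV HVU) : I). exact Vx.
Qed.

Lemma net_avoiding_of_not_nbhd (U : G -> Prop) x :
  is_topology tau -> ~ (exists V, tau V /\ V x /\ forall z, V z -> U z) ->
  exists (D : directed) (y : D -> G), converges tau y x /\ forall d, ~ U (y d).
Proof.
  intros [HT [_ HI]] Hno.
  assert (Hy : forall V, tau V /\ V x -> exists y, V y /\ ~ U y).
  { intros V [HV Vx]. apply NNPP; intro Hn. apply Hno. exists V. split; [|split]; auto.
    intros z Vz. apply NNPP; intro Uz. apply Hn. exists z; auto. }
  set (DT := {V : G -> Prop | tau V /\ V x}).
  set (Dle := fun V1 V2 : DT => forall z, proj1_sig V2 z -> proj1_sig V1 z).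
  assert (Hrefl : forall q, Dle q q) by (intros q z; auto).
  assert (Htrans : forall a b c, Dle a b -> Dle b c -> Dle a c) by (intros a b c H1 H2 z Hz; auto).
  assert (Hdir : forall a b, exists c, Dle a c /\ Dle b c).
  { intros [V1 [HV1 V1x]] [V2 [HV2 V2x]].
    exists (exist _ (fun z => V1 z /\ V2 z) (conj (HI _ _ HV1 HV2) (conj V1x V2x)) : DT).
    split; intros z [Hz1 Hz2]; auto. }
  exists (Build_directed Dle Hrefl Htrans Hdir (exist _ (fun _ => True) (conj HT I))).
  exists (fun V => proj1_sig (constructive_indefinite_description _ (Hy _ (proj2_sig V)))).
  split.
  - intros W HW Wx. exists (exist _ W (conj HW Wx) : DT). intros V HV. apply HV.
    exact (proj1 (proj2_sig (constructive_indefinite_description _ (Hy _ (proj2_sig V))))).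
  - intro V. exact (proj2 (proj2_sig (constructive_indefinite_description _ (Hy _ (proj2_sig V))))).
Qed.

End Nets.

Lemma open_of_subnet_converges {G : Type} (tau tau' : (G -> Prop) -> Prop) (U : G -> Prop) :
  is_topology tau' ->
  (forall (D : directed) (y : D -> G) x, converges tau' y x ->
     exists (E : directed) (h : E -> D), is_subnet D E h /\ converges tau (fun e => y (h e)) x) ->
  tau U -> tau' U.
Proof.
  intros Htop' Hsubnet HU. apply (open_of_nbhds U Htop'). intros x Ux.
  apply NNPP; intro Hno.
  destruct (net_avoiding_of_not_nbhd U Htop' Hno) as [D [y [Hy Hout]]].
  destruct (Hsubnet D y x Hy) as [E [h [_ Hyh]]].
  destruct (eventually_ex (Hyh U HU Ux)) as [d Hd]. exact (Hout _ Hd).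
Qed.

Section TopologicalGroups.
Context {G : Type} (Gr : GroupOn G).
Local Notation "x * y" := (gmul Gr x y).
Local Notation "x ^-1" := (ginv Gr x) (at level 3).
Local Notation e := (gone Gr).

Lemma ginvK x : x^-1^-1 = x.
Proof.
  rewrite <- (gmul_1r Gr (x^-1^-1)), <- (gmul_Vl Gr x), gmul_assoc, gmul_Vl, gmul_1l.
  reflexivity.
Qed.

Lemma mulg_cancel_outer c1 a c2 : a = c1^-1 * (c1 * a * c2) * c2^-1.
Proof.
  rewrite !gmul_assoc, gmul_Vl, gmul_1l, <- gmul_assoc, gmul_Vr, gmul_1r. reflexivity.
Qed.

Lemma conjg_eq1 b u : b^-1 * u * b = e -> u = e.
Proof.
  intro H. rewrite (mulg_cancel_outer (b^-1) u b), ginvK, H, gmul_1r, gmul_Vr. reflexivity.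
Qed.

Lemma decompose_net {A C : G -> Prop} {D : directed} (y : D -> G) :
  (forall g, exists c1 a c2, C c1 /\ A a /\ C c2 /\ g = c1 * a * c2) ->
  exists c1 a c2 : D -> G,
    forall d, C (c1 d) /\ A (a d) /\ C (c2 d) /\ y d = c1 d * a d * c2 d.
Proof.
  intro Hdec.
  assert (Hdec3 : forall d, exists t : G * G * G, C (fst (fst t)) /\ A (snd (fst t)) /\
            C (snd t) /\ y d = fst (fst t) * snd (fst t) * snd t).
  { intro d. destruct (Hdec (y d)) as [c1 [a [c2 Hc]]]. exists (c1, a, c2). exact Hc. }
  set (t := fun d => proj1_sig (constructive_indefinite_description _ (Hdec3 d))).
  exists (fun d => fst (fst (t d))), (fun d => snd (fst (t d))), (fun d => snd (t d)).
  intro d. exact (proj2_sig (constructive_indefinite_description _ (Hdec3 d))).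
Qed.

Section Convergence.
Variable tau : (G -> Prop) -> Prop.
Hypothesis Htg : is_topological_group Gr tau.

Lemma converges_mul (D : directed) (x y : D -> G) p q :
  converges tau x p -> converges tau y q -> converges tau (fun d => x d * y d) (p * q).
Proof.
  destruct Htg as [_ [Hm _]]. intros Hx Hy U HU Upq.
  destruct (Hm U HU p q Upq) as [V [W [HV [HW [Vp [Wq HVW]]]]]].
  destruct (eventually_and (Hx V HV Vp) (Hy W HW Wq)) as [a0 Ha0].
  exists a0. intros a Ha. destruct (Ha0 a Ha). auto.
Qed.

Lemma converges_mul3 (D : directed) (x y z : D -> G) p q r :
  converges tau x p -> converges tau y q -> converges tau z r ->
  converges tau (fun d => x d * y d * z d) (p * q * r).
Proof. intros Hx Hy Hz. apply converges_mul; [apply converges_mul|]; assumption. Qed.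

Lemma converges_inv (D : directed) (x : D -> G) p :
  converges tau x p -> converges tau (fun d => (x d)^-1) (p^-1).
Proof.
  destruct Htg as [_ [_ Hi]]. intros Hx U HU Up.
  exact (Hx (fun z => U (z^-1)) (Hi U HU) Up).
Qed.

End Convergence.

Section CoarserTopology.
Variables tau tau' : (G -> Prop) -> Prop.
Hypotheses (Htg : is_topological_group Gr tau) (Hh : hausdorff tau).
Hypotheses (Htg' : is_topological_group Gr tau') (Hh' : hausdorff tau').
Hypothesis Hcoarser : forall U, tau' U -> tau U.

Lemma Uplus_sub1 (D : directed) (a : D -> G) b u :
  converges tau' a b -> Uplus Gr tau a u -> u = e.
Proof.
  intros Ha Hu. apply (conjg_eq1 b).
  apply (converges_unique (x := fun d => (a d)^-1 * u * a d) Hh').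
  - apply (converges_mul3 Htg'); [apply (converges_inv Htg') | apply converges_const |]; exact Ha.
  - exact (converges_coarser Hcoarser Hu).
Qed.

Section QuasiSemiSimple.
Variables A C : G -> Prop.
Hypothesis HC : compact tau C.
Hypothesis Hdec : forall g, exists c1 a c2, C c1 /\ A a /\ C c2 /\ g = c1 * a * c2.
Hypothesis Hnet : forall (D : directed) (a : D -> G), (forall i, A (a i)) ->
  to_infinity tau a ->
  exists (E : directed) (h : E -> D),
    is_subnet D E h /\ ~ precompact tau (Uplus Gr tau (fun b => a (h b))) /\
    dense tau (generated Gr (fun x => Uplus Gr tau (fun b => a (h b)) x \/
                                      Uminus Gr tau (fun b => a (h b)) x \/
                                      Uzero Gr tau (fun b => a (h b)) x)).

Lemma qss_not_to_infinity (D : directed) (a : D -> G) b :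
  (forall i, A (a i)) -> converges tau' a b -> ~ to_infinity tau a.
Proof.
  intros HA Ha Hinf. destruct (Hnet HA Hinf) as [E [h [Hs [Hnp _]]]].
  apply Hnp, (precompact_sub1 (p := e) Hh). intros u.
  apply (Uplus_sub1 (b := b)), (converges_subnet Ha Hs).
Qed.

Lemma qss_subnet_converges (D : directed) (y : D -> G) x :
  converges tau' y x ->
  exists (E : directed) (h : E -> D), is_subnet D E h /\ converges tau (fun e => y (h e)) x.
Proof.
  intro Hy. pose proof (proj1 Htg) as Htop.
  destruct (decompose_net y Hdec) as [c1 [a [c2 Hya]]].
  destruct (compact_subnet_converges (x := c1) Htop HC) as [F1 [k1 [l1 [Hs1 Hc1]]]].
  { intro d. exists d. split; [apply dle_refl | apply Hya]. }
  destruct (compact_subnet_converges (x := fun f => c2 (k1 f)) Htop HC)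
    as [F2 [k2 [l2 [Hs2 Hc2]]]].
  { intro d. exists d. split; [apply dle_refl | apply Hya]. }
  set (h12 := fun f => k1 (k2 f)).
  assert (Hs12 : is_subnet D F2 h12) by exact (is_subnet_comp Hs1 Hs2).
  assert (Hc1' : converges tau (fun f => c1 (h12 f)) l1) by exact (converges_subnet Hc1 Hs2).
  assert (Ha' : converges tau' (fun f => a (h12 f)) (l1^-1 * x * l2^-1)).
  { apply (converges_ext (x := fun f => (c1 (h12 f))^-1 * y (h12 f) * (c2 (h12 f))^-1)).
    { intro f. rewrite (proj2 (proj2 (proj2 (Hya (h12 f))))). symmetry. apply mulg_cancel_outer. }
    apply (converges_mul3 Htg').
    - apply (converges_inv Htg'), (converges_coarser Hcoarser), Hc1'.
    - exact (converges_subnet Hy Hs12).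
    - apply (converges_inv Htg'), (converges_coarser Hcoarser), Hc2. }
  destruct (not_to_infinity_frequently
              (qss_not_to_infinity (fun f => proj1 (proj2 (Hya (h12 f)))) Ha'))
    as [K [HK Hfreq]].
  destruct (compact_subnet_converges Htop HK Hfreq) as [F3 [k3 [p [Hs3 Hc3]]]].
  exists F3, (fun f => h12 (k3 f)). split; [exact (is_subnet_comp Hs12 Hs3)|].
  assert (Hyt : converges tau (fun f => y (h12 (k3 f))) (l1 * p * l2)).
  { apply (converges_ext (x := fun f => c1 (h12 (k3 f)) * a (h12 (k3 f)) * c2 (h12 (k3 f)))).
    { intro f. symmetry. apply Hya. }
    apply (converges_mul3 Htg); [exact (converges_subnet Hc1' Hs3) | exact Hc3 |].
    exact (converges_subnet Hc2 Hs3). }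
  replace x with (l1 * p * l2); [exact Hyt|].
  apply (converges_unique Hh' (converges_coarser Hcoarser Hyt)).
  exact (converges_subnet Hy (is_subnet_comp Hs12 Hs3)).
Qed.

End QuasiSemiSimple.
End CoarserTopology.
End TopologicalGroups.

Theorem theorem5p3 (G : Type) (Gr : GroupOn G) (tau : (G -> Prop) -> Prop) :
  is_topological_group Gr tau -> hausdorff tau -> locally_compact tau ->
  quasi_semi_simple Gr tau ->
  forall tau' : (G -> Prop) -> Prop,
    is_topological_group Gr tau' -> hausdorff tau' ->
    (forall U, tau' U -> tau U) ->
    forall U, tau U <-> tau' U.
Proof.
  intros Htg Hh _ [A [C [_ [_ [HC [Hdec Hnet]]]]]] tau' Htg' Hh' Hcoarser U.
  split; [|apply Hcoarser].
  apply open_of_subnet_converges; [exact (proj1 Htg')|].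
  exact (qss_subnet_converges Htg Hh Htg' Hh' Hcoarser A HC Hdec Hnet).
Qed.
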